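(* Let $\mathcal{C}$ be the split Cayley algebra over a field $\mathbb{F}$ with norm $\mathrm{n}$. Then every $2$-local automorphism of $\mathcal{C}$ is an automorphism; that is, the set of $2$-local automorphisms of $\mathcal{C}$ equals $\mathrm{Aut}(\mathcal{C})$.
   Context: A Cayley (octonion) algebra over $\mathbb{F}$ is a unital nonassociative algebra $\mathcal{C}$ of dimension $8$ over $\mathbb{F}$ endowed with a quadratic form $\mathrm{n}:\mathcal{C}\to\mathbb{F}$ (the norm) such that $\mathrm{n}(xy)=\mathrm{n}(x)\mathrm{n}(y)$ for all $x,y$ and whose polar form $\mathrm{n}(x,y)=\mathrm{n}(x+y)-\mathrm{n}(x)-\mathrm{n}(y)$ is nondegenerate. The split Cayley algebra is the (unique up to isomorphism) Cayley algebra whose norm is isotropic, i.e. $\mathrm{n}(x)=0$ for some $x\neq 0$. A map $\Delta:\mathcal{C}\to\mathcal{C}$ (not assumed linear) is a $2$-local automorphism if for every pair $x,y\in\mathcal{C}$ there is an algebra automorphism $\varphi_{x,y}$ of $\mathcal{C}$ with $\Delta(x)=\varphi_{x,y}(x)$ and $\Delta(y)=\varphi_{x,y}(y)$. *)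

From HB Require Import structures.
From mathcomp Require Import all_boot all_order all_algebra.
Set Implicit Arguments. Unset Strict Implicit. Unset Printing Implicit Defensive.
Import GRing.Theory.
Local Open Scope ring_scope.

Section CayleyDefs.
Variables (F : fieldType) (V : vectType F).

Definition bilinear_mul (mul : V -> V -> V) : Prop :=
  (forall a x y z, mul (a *: x + y) z = a *: mul x z + mul y z) /\
  (forall a x y z, mul z (a *: x + y) = a *: mul z x + mul z y).

Definition polar (n : V -> F) (x y : V) : F := n (x + y) - n x - n y.

Definition quadratic_form (n : V -> F) : Prop :=
  [/\ forall a x, n (a *: x) = a ^+ 2 * n x,
      forall a x y z, polar n (a *: x + y) z = a * polar n x z + polar n y z
    & forall a x y z, polar n z (a *: x + y) = a * polar n z x + polar n z y].

Definition nondegenerate_polar (n : V -> F) : Prop :=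
  forall x, (forall y, polar n x y = 0) -> x = 0.

Definition cayley_algebra (mul : V -> V -> V) (n : V -> F) : Prop :=
  [/\ \dim {:V} = 8%N,
      bilinear_mul mul,
      exists e : V, forall x, mul e x = x /\ mul x e = x,
      quadratic_form n /\ nondegenerate_polar n
    & forall x y, n (mul x y) = n x * n y].

Definition isotropic (n : V -> F) : Prop := exists x : V, x != 0 /\ n x = 0.

Definition split_cayley_algebra (mul : V -> V -> V) (n : V -> F) : Prop :=
  cayley_algebra mul n /\ isotropic n.

Definition is_automorphism (mul : V -> V -> V) (f : V -> V) : Prop :=
  [/\ forall a x y, f (a *: x + y) = a *: f x + f y,
      bijective f
    & forall x y, f (mul x y) = mul (f x) (f y)].

(* 2-local automorphism (no linearity assumed) *)
Definition two_local_automorphism (mul : V -> V -> V) (D : V -> V) : Prop :=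
  forall x y : V, exists phi : V -> V,
    [/\ is_automorphism mul phi, D x = phi x & D y = phi y].

End CayleyDefs.

From HB Require Import structures.
From mathcomp Require Import all_boot all_order all_algebra.
From mathcomp Require Import ring.
From Stdlib Require Import Classical.
Set Implicit Arguments. Unset Strict Implicit. Unset Printing Implicit Defensive.
Import GRing.Theory.
Local Open Scope ring_scope.

(* A 2-local automorphism D preserves the polar form b of the norm, since every
   automorphism preserves the norm.  A map preserving a nondegenerate bilinear form on a
   finite-dimensional space sends a basis to a free family, so its image spans, and it is
   linear because D (a x + y) - a D x - D y is orthogonal to that image; it is injective
   by nondegeneracy, hence bijective.
   For multiplicativity take f with n f = 0 and trace f = 1 (it exists as the norm is
   isotropic).  Splitting y = f y + bar f y and applying 2-locality to the pairs (f, f y)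
   and (f, bar f y) gives D (f y) = D f D y.  So the linear map x |-> D (x y) - D x D y
   vanishes on such idempotents, and these span the algebra: every piece of the Peirce
   decomposition of y relative to f and bar f is an isotropic vector w orthogonal to an
   idempotent g, and (1 - trace w) g + w is again an idempotent. *)

Section LinearLaw.
Variables (R : pzRingType) (U W : lmodType R) (f : U -> W).
Hypothesis f_lin : linear f.

Lemma linD x y : f (x + y) = f x + f y.
Proof. by have := f_lin 1 x y; rewrite !scale1r. Qed.

Lemma lin0 : f 0 = 0.
Proof. by apply: (addrI (f 0)); rewrite -linD !addr0. Qed.

Lemma linZ a x : f (a *: x) = a *: f x.
Proof. by have := f_lin a x 0; rewrite !addr0 lin0 addr0. Qed.

Lemma linB x y : f (x - y) = f x - f y.
Proof. by rewrite linD -scaleN1r linZ scaleN1r. Qed.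

Lemma lin_sum (I : Type) (r : seq I) (P : pred I) (g : I -> U) :
  f (\sum_(i <- r | P i) g i) = \sum_(i <- r | P i) f (g i).
Proof. exact: (big_morph f linD lin0). Qed.

End LinearLaw.

Section QuadraticForm.
Variables (F : fieldType) (V : vectType F) (n : V -> F).
Hypotheses (n_quad : quadratic_form n) (n_nondeg : nondegenerate_polar n).
Local Notation b := (polar n).

Lemma normZ a x : n (a *: x) = a ^+ 2 * n x.
Proof. by case: n_quad. Qed.

Lemma norm0 : n 0 = 0.
Proof. by rewrite -(scale0r 0) normZ expr0n mul0r. Qed.

Lemma normN x : n (- x) = n x.
Proof. by rewrite -scaleN1r normZ sqrrN expr1n mul1r. Qed.

Lemma normD x y : n (x + y) = n x + n y + b x y.
Proof. by rewrite /polar; ring. Qed.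

Lemma polarC x y : b x y = b y x.
Proof. by rewrite /polar (addrC x y); ring. Qed.

Lemma polar_linear z : linear (b^~ z : V -> F^o).
Proof. by case: n_quad => _ lin_l _ a x y; apply: lin_l. Qed.

Lemma polarDl z x y : b (x + y) z = b x z + b y z.
Proof. exact: linD (polar_linear z) x y. Qed.
Lemma polarZl z a x : b (a *: x) z = a * b x z.
Proof. exact: linZ (polar_linear z) a x. Qed.
Lemma polarBl z x y : b (x - y) z = b x z - b y z.
Proof. exact: linB (polar_linear z) x y. Qed.
Lemma polar0l z : b 0 z = 0.
Proof. exact: lin0 (polar_linear z). Qed.

Lemma polarDr z x y : b z (x + y) = b z x + b z y.
Proof. by rewrite !(polarC z) polarDl. Qed.
Lemma polarZr z a x : b z (a *: x) = a * b z x.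
Proof. by rewrite !(polarC z) polarZl. Qed.
Lemma polarBr z x y : b z (x - y) = b z x - b z y.
Proof. by rewrite !(polarC z) polarBl. Qed.

Lemma polar_suml (I : Type) (r : seq I) (P : pred I) (g : I -> V) z :
  b (\sum_(i <- r | P i) g i) z = \sum_(i <- r | P i) b (g i) z.
Proof. exact: (big_morph (b^~ z) (polarDl z) (polar0l z)). Qed.

Lemma polar_sumr (I : Type) (r : seq I) (P : pred I) (g : I -> V) z :
  b z (\sum_(i <- r | P i) g i) = \sum_(i <- r | P i) b z (g i).
Proof. by rewrite polarC polar_suml; apply: eq_bigr => i _; rewrite polarC. Qed.

Lemma polar_self x : b x x = 2 * n x.
Proof. by rewrite /polar -{1 2}[x]scale1r -scalerDl normZ; ring. Qed.

Lemma polar_inj x y : (forall z, b x z = b y z) -> x = y.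
Proof.
move=> bxy; apply/eqP; rewrite -subr_eq0; apply/eqP/n_nondeg => z.
by rewrite polarBl bxy subrr.
Qed.

Lemma polar_span_eq0 (s : seq V) w :
  <<s>>%VS = fullv -> (forall x, x \in s -> b w x = 0) -> w = 0.
Proof.
move=> s_full w_s; apply: polar_inj => z; rewrite polar0l.
have: z \in <<in_tuple s>>%VS by rewrite s_full memvf.
move/coord_span->; rewrite polar_sumr big1 // => i _.
by rewrite polarZr w_s ?mulr0 // mem_nth.
Qed.

Section Isometry.
Variable D : V -> V.
Hypothesis D_polar : forall x y, b (D x) (D y) = b x y.

Let X := vbasis {:V}.

Lemma isometry_free : free (map D X).
Proof.
apply/(@freeP _ _ _ (map_tuple D X)) => k Dk0.
have nthD (i : 'I_(\dim {:V})) : (map D X)`_i = D X`_i.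
  by rewrite (nth_map 0) ?size_tuple.
pose w := \sum_i k i *: X`_i.
suff w0 : w = 0 by have /freeP/(_ k w0) := basis_free (vbasisP {:V}).
apply: (polar_span_eq0 (span_basis (vbasisP {:V}))) => x _.
transitivity (b (\sum_i k i *: (map D X)`_i) (D x)); last by rewrite Dk0 polar0l.
by rewrite !polar_suml; apply: eq_bigr => i _; rewrite nthD !polarZl D_polar.
Qed.

Lemma isometry_span : <<map D X>>%VS = fullv.
Proof.
apply/eqP; rewrite eqEdim subvf /=.
by move/eqnP: isometry_free => ->; rewrite size_map size_tuple.
Qed.

Lemma isometry_linear : linear D.
Proof.
move=> a x y; apply/eqP; rewrite -subr_eq0; apply/eqP.
apply: (polar_span_eq0 isometry_span) => _ /mapP[z _ ->].
by rewrite polarBl polarDl polarZl !D_polar polarDl polarZl subrr.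
Qed.

Lemma isometry_inj : injective D.
Proof. by move=> x y Dxy; apply: polar_inj => z; rewrite -!(D_polar _ z) Dxy. Qed.

Lemma isometry_bij : bijective D.
Proof.
have D_surj v : exists u, D u == v.
  have: v \in <<in_tuple (map D X)>>%VS by rewrite isometry_span memvf.
  move/coord_span->; exists (\sum_i coord (in_tuple (map D X)) i v *: X`_i).
  apply/eqP; rewrite (lin_sum isometry_linear); apply: eq_bigr => i _.
  by rewrite (linZ isometry_linear) (nth_map 0) //; case: i => i /=; rewrite size_map.
exists (fun v => xchoose (D_surj v)) => [x | v]; last exact/eqP/(xchooseP (D_surj v)).
by apply: isometry_inj; apply/eqP/(xchooseP (D_surj (D x))).
Qed.

End Isometry.

Section CompositionAlgebra.
Variables (mul : V -> V -> V) (e : V).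
Hypotheses (mul_bilin : bilinear_mul mul) (n_mul : forall x y, n (mul x y) = n x * n y).
Hypotheses (e_unit : forall x, mul e x = x /\ mul x e = x) (e_neq0 : e != 0).

Local Notation "x *o y" := (mul x y) (at level 40, left associativity).
Local Notation trace x := (b x e).
Local Notation bar x := (trace x *: e - x).

Let mul_linear_l z : linear (mul^~ z).
Proof. by case: mul_bilin => lin_l _ a x y; apply: lin_l. Qed.
Let mul_linear_r z : linear (mul z).
Proof. by case: mul_bilin => _ lin_r a x y; apply: lin_r. Qed.

Lemma omulDl x y z : (x + y) *o z = x *o z + y *o z.
Proof. exact: linD (mul_linear_l z) x y. Qed.
Lemma omulDr x y z : z *o (x + y) = z *o x + z *o y.
Proof. exact: linD (mul_linear_r z) x y. Qed.
Lemma omulZl a x z : (a *: x) *o z = a *: (x *o z).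
Proof. exact: linZ (mul_linear_l z) a x. Qed.
Lemma omulZr a x z : z *o (a *: x) = a *: (z *o x).
Proof. exact: linZ (mul_linear_r z) a x. Qed.
Lemma omulBl x y z : (x - y) *o z = x *o z - y *o z.
Proof. exact: linB (mul_linear_l z) x y. Qed.
Lemma omulBr x y z : z *o (x - y) = z *o x - z *o y.
Proof. exact: linB (mul_linear_r z) x y. Qed.

Lemma omul0l x : 0 *o x = 0.
Proof. exact: lin0 (mul_linear_l x). Qed.

Lemma omul1l x : e *o x = x. Proof. by case: (e_unit x). Qed.
Lemma omul1r x : x *o e = x. Proof. by case: (e_unit x). Qed.

Lemma norm1 : n e = 1.
Proof.
have ne_idem : n e = n e * n e by rewrite -n_mul omul1l.
have [ne0 | ] := eqVneq (n e) 0; last first.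
  by move=> ne_neq0; apply: (mulfI ne_neq0); rewrite mulr1 -ne_idem.
have n_eq0 x : n x = 0 by rewrite -(omul1l x) n_mul ne0 mul0r.
suff e0 : e = 0 by move: e_neq0; rewrite e0 eqxx.
by apply: n_nondeg => y; rewrite /polar !n_eq0 !subr0.
Qed.

Lemma trace1 : trace e = 2.
Proof. by rewrite polar_self norm1 mulr1. Qed.

Lemma polar_mul2l x y z : b (x *o y) (x *o z) = n x * b y z.
Proof. by rewrite /polar -omulDr !n_mul; ring. Qed.

Lemma polar_mul4 x y w z : b (x *o y) (w *o z) + b (x *o z) (w *o y) = b x w * b y z.
Proof.
have := polar_mul2l (x + w) y z.
rewrite !omulDl !polarDl !polarDr !polar_mul2l normD (polarC (w *o y)) => expand.
transitivity ((n x + n w + b x w) * b y z - n x * b y z - n w * b y z); last by ring.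
by rewrite -expand; ring.
Qed.

Lemma polar_mull_adj x y z : b (x *o y) z = b y (bar x *o z).
Proof.
have := polar_mul4 x y e z; rewrite !omul1l => split4.
by rewrite omulBl omulZl omul1l polarBr polarZr -split4 polarC (polarC (x *o z)); ring.
Qed.

Lemma polar_mulr_adj x y z : b (x *o y) z = b x (z *o bar y).
Proof.
have := polar_mul4 x y z e; rewrite !omul1r => split4.
rewrite omulBr omulZr omul1r polarBr polarZr.
by rewrite -[b (x *o y) z](addrK (b x (z *o y))) split4; ring.
Qed.

Lemma trace_bar x : trace (bar x) = trace x.
Proof. by rewrite polarBl polarZl trace1; ring. Qed.

Lemma barK x : bar (bar x) = x.
Proof. by rewrite trace_bar opprB addrC subrK. Qed.

Lemma norm_bar x : n (bar x) = n x.
Proof. by rewrite normD normZ normN norm1 -scaleN1r polarZr polarZl (polarC e x); ring. Qed.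

Lemma bar_mulK x y : bar x *o (x *o y) = n x *: y.
Proof. by apply: polar_inj => z; rewrite polar_mull_adj barK polar_mul2l polarZl. Qed.

Lemma mul_barK x y : x *o (bar x *o y) = n x *: y.
Proof. by have := bar_mulK (bar x) y; rewrite barK norm_bar. Qed.

Lemma mull_quadratic x y : x *o (x *o y) = trace x *: (x *o y) - n x *: y.
Proof. by rewrite -(bar_mulK x y) omulBl omulZl omul1l opprB addrC subrK. Qed.

Lemma mul_quadratic x : x *o x = trace x *: x - n x *: e.
Proof. by have := mull_quadratic x e; rewrite !omul1r. Qed.

Section Automorphism.
Variable phi : V -> V.
Hypothesis phi_aut : is_automorphism mul phi.

Let phi_lin : linear phi. Proof. by case: phi_aut. Qed.
Let phi_mul x y : phi (x *o y) = phi x *o phi y. Proof. by case: phi_aut. Qed.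

Lemma aut1 : phi e = e.
Proof.
case: phi_aut => _ [psi _ psiK] _.
by have := phi_mul e (psi e); rewrite omul1l psiK omul1r.
Qed.

(* phi preserves the relation x *o x = trace x *: x - n x *: e, which determines n x unless x is a
   multiple of e, and phi fixes those. *)
Lemma aut_norm x : n (phi x) = n x.
Proof.
set p := phi x.
have sq_p : p *o p = trace x *: p - n x *: e.
  by rewrite -phi_mul mul_quadratic (linB phi_lin) !(linZ phi_lin) aut1.
have lin_dep : (trace p - trace x) *: p = (n p - n x) *: e.
  have := mul_quadratic p; rewrite sq_p [(trace p - _) *: _]scalerBl [(n p - _) *: _]scalerBl.
  set tp := trace p *: p; set tx := trace x *: p; set np := n p *: e; set nx := n x *: e.
  move=> quad_p; have -> : tp = tx - nx + np by rewrite quad_p subrK.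
  by rewrite -addrA addrC addrA subrK.
have [tr_eq | tr_neq] := eqVneq (trace p) (trace x).
  move/esym/eqP: lin_dep; rewrite tr_eq subrr scale0r.
  by rewrite scaler_eq0 (negbTE e_neq0) orbF subr_eq0 => /eqP.
pose c := (n p - n x) / (trace p - trace x).
have p_e : p = c *: e.
  by rewrite /c mulrC -scalerA -lin_dep scalerA mulVf ?scale1r // subr_eq0.
have x_e : x = c *: e.
  by case: phi_aut => _ /bij_inj phi_inj _; apply: phi_inj; rewrite (linZ phi_lin) aut1.
by move: tr_neq; rewrite p_e -x_e eqxx.
Qed.

Lemma aut_polar x y : b (phi x) (phi y) = b x y.
Proof. by rewrite /polar -(linD phi_lin) !aut_norm. Qed.

End Automorphism.

(* By [mul_quadratic], these are exactly the idempotents other than 0 and e. *)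
Definition nontrivial_idem f := n f = 0 /\ trace f = 1.

Lemma idem_bar f : nontrivial_idem f -> nontrivial_idem (bar f).
Proof. by case=> nf0 tf1; split; rewrite ?norm_bar ?trace_bar. Qed.

Lemma idem_add_bar f : nontrivial_idem f -> f + bar f = e.
Proof. by case=> _ ->; rewrite scale1r addrC subrK. Qed.

Lemma idem_mulK f y : nontrivial_idem f -> f *o (f *o y) = f *o y.
Proof. by case=> nf0 tf1; rewrite mull_quadratic nf0 tf1 scale0r subr0 scale1r. Qed.

Lemma idem_sq f : nontrivial_idem f -> f *o f = f.
Proof. by case=> nf0 tf1; rewrite mul_quadratic nf0 tf1 scale0r subr0 scale1r. Qed.

Lemma idem_mul_bar f y : nontrivial_idem f -> f *o (bar f *o y) = 0.
Proof. by case=> nf0 _; rewrite mul_barK nf0 scale0r. Qed.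

Lemma idem_shift g w :
  nontrivial_idem g -> n w = 0 -> b g w = 0 -> nontrivial_idem ((1 - trace w) *: g + w).
Proof.
case=> ng0 tg1 nw0 bgw0; split; first by rewrite normD normZ polarZl ng0 nw0 bgw0; ring.
by rewrite polarDl polarZl tg1; ring.
Qed.

Lemma peirce_decomposition g y : nontrivial_idem g ->
  y = (g *o y) *o g + (g *o y) *o bar g + ((bar g *o y) *o bar g + (bar g *o y) *o g).
Proof.
move=> g_idem; have e_split := idem_add_bar g_idem.
by rewrite -!omulDr (addrC _ g) e_split !omul1r -omulDl e_split omul1l.
Qed.

Lemma peirce_orth_diag g y : nontrivial_idem g -> b g ((g *o y) *o g) = 0.
Proof.
move=> g_idem; rewrite polarC polar_mulr_adj -(omul1r (bar g)) idem_mul_bar //.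
by rewrite /polar !addr0 norm0 subrr subr0.
Qed.

Lemma peirce_orth_off g y : nontrivial_idem g -> b g ((g *o y) *o bar g) = 0.
Proof.
move=> g_idem; have [ng0 _] := g_idem.
rewrite polarC polar_mulr_adj barK idem_sq //.
by rewrite -{2}(omul1r g) polar_mul2l ng0 mul0r.
Qed.

Lemma exists_idem : isotropic n -> exists f, nontrivial_idem f.
Proof.
case=> x [x_neq0 nx0].
have [y bxy] : exists y, b x y != 0.
  apply/not_all_not_ex => bx0; move/eqP: x_neq0; apply; apply: n_nondeg => y.
  by have := bx0 y; case: eqP.
exists ((b x y)^-1 *: (x *o bar y)); split; first by rewrite normZ n_mul nx0 mul0r mulr0.
by rewrite polarZl polar_mulr_adj omul1l barK mulVf.
Qed.

Section VanishOnIdempotents.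
Variables (W : lmodType F) (G : V -> W).
Hypotheses (G_lin : linear G) (G_idem : forall f, nontrivial_idem f -> G f = 0).

Lemma vanish_isotropic_orth g w : nontrivial_idem g -> n w = 0 -> b g w = 0 -> G w = 0.
Proof.
move=> g_idem nw0 bgw0; have := G_idem (idem_shift g_idem nw0 bgw0).
by rewrite G_lin G_idem // scaler0 add0r.
Qed.

Lemma vanish_peirce g y : nontrivial_idem g -> G ((g *o y) *o g) = 0 /\ G ((g *o y) *o bar g) = 0.
Proof.
move=> g_idem; have [ng0 _] := g_idem.
have isotropic_piece h : n ((g *o y) *o h) = 0 by rewrite !n_mul ng0 !mul0r.
by split; apply: (vanish_isotropic_orth g_idem); rewrite ?peirce_orth_diag ?peirce_orth_off.
Qed.

Lemma vanish_everywhere : (exists g, nontrivial_idem g) -> forall y, G y = 0.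
Proof.
case=> g g_idem y; have bar_idem := idem_bar g_idem.
have [G1 G2] := vanish_peirce y g_idem; have [G3 G4] := vanish_peirce y bar_idem.
rewrite barK in G4.
by rewrite (peirce_decomposition y g_idem) !(linD G_lin) G1 G2 G3 G4 !addr0.
Qed.

End VanishOnIdempotents.

Section TwoLocal.
Variable D : V -> V.
Hypothesis D_2loc : two_local_automorphism mul D.

Lemma two_local_polar x y : b (D x) (D y) = b x y.
Proof. by have [phi [phi_aut -> ->]] := D_2loc x y; rewrite aut_polar. Qed.

Let D_lin : linear D := isometry_linear two_local_polar.

Lemma two_local_mul_idem f y : nontrivial_idem f -> D (f *o y) = D f *o D y.
Proof.
move=> f_idem; set y1 := f *o y; set y2 := bar f *o y.
have y_split : y = y1 + y2 by rewrite -omulDl idem_add_bar // omul1l.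
have [phi1 [phi1_aut Df1 Dy1]] := D_2loc f y1.
have [phi2 [phi2_aut Df2 Dy2]] := D_2loc f y2.
have D_y1 : D f *o D y1 = D y1.
  by case: phi1_aut => _ _ phi1_mul; rewrite Df1 Dy1 -phi1_mul idem_mulK.
have D_y2 : D f *o D y2 = 0.
  case: phi2_aut => phi2_lin _ phi2_mul.
  by rewrite Df2 Dy2 -phi2_mul idem_mul_bar // (lin0 phi2_lin).
by rewrite [in RHS]y_split (linD D_lin) omulDr D_y1 D_y2 addr0.
Qed.

Lemma two_local_mul : isotropic n -> forall x y, D (x *o y) = D x *o D y.
Proof.
move=> n_iso x y; apply/eqP; rewrite -subr_eq0; apply/eqP; move: x.
apply: (vanish_everywhere (G := fun x => D (x *o y) - D x *o D y)); last exact: exists_idem.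
  move=> a u v; rewrite omulDl omulZl !(linD D_lin) !(linZ D_lin) omulDl omulZl.
  by rewrite scalerBr addrACA opprD.
by move=> f f_idem; rewrite two_local_mul_idem // subrr.
Qed.

Lemma two_local_aut : isotropic n -> is_automorphism mul D.
Proof.
move=> n_iso; split; [exact: D_lin | exact: isometry_bij two_local_polar | exact: two_local_mul].
Qed.

End TwoLocal.

End CompositionAlgebra.
End QuadraticForm.

Theorem theorem4p3 (F : fieldType) (V : vectType F) (mul : V -> V -> V) (n : V -> F) :
  split_cayley_algebra mul n ->
  forall D : V -> V, two_local_automorphism mul D <-> is_automorphism mul D.
Proof.
case=> [[_ mul_bilin [e e_unit] [n_quad n_nondeg] n_mul] n_iso] D; split; last first.
  by move=> D_aut x y; exists D.
have e_neq0 : e != 0.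
  case: n_iso => x [x_neq0 _]; apply: contraNneq x_neq0 => e0.
  by case: (e_unit x) => <- _; rewrite e0 omul0l.
move=> D_2loc; exact: two_local_aut n_iso.
Qed.
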